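(* For each $n\in\mathbb{N}$, the $\mathbb{Z}$-linear map $\mathbf{f}_n:QSymm\to QSymm$ given on compositions by $\mathbf{f}_n([a_1,\dots,a_m])=[na_1,\dots,na_m]$ is a Hopf algebra endomorphism of $QSymm$; $\mathbf{f}_1=\mathrm{id}$, $\mathbf{f}_n\mathbf{f}_m=\mathbf{f}_{nm}$; $\mathbf{f}_n$ maps the subring $Symm\subset QSymm$ of symmetric functions into itself, where it acts as the Frobenius operator determined by $\mathbf{f}_n(p_k)=p_{nk}$ on the power sums $p_k=\sum_i X_i^k$; and for every prime $p$ and every $x\in QSymm$, $\mathbf{f}_p(x)\equiv x^p \pmod{p\,QSymm}$. *)

From HB Require Import structures.
From mathcomp Require Import all_boot all_order all_algebra.
From mathcomp Require Import finmap.
From mathcomp.multinomials Require Import monalg.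
Set Implicit Arguments. Unset Strict Implicit. Unset Printing Implicit Defensive.
Import Order.TTheory GRing.Theory Num.Theory.
Local Open Scope ring_scope.

(* The ambient free Z-module on words over nat; QSymm is the Z-submodule
   spanned by the basis elements [a_1;...;a_m] = << [:: a_1; ...; a_m] >>
   indexed by compositions (all parts positive). *)
Definition QS := {malg int[seq nat]}.
(* QSymm (x) QSymm: free Z-module on pairs of words *)
Definition QS2 := {malg int[(seq nat * seq nat)%type]}.

Definition is_comp (s : seq nat) : bool := all (fun a => 0 < a)%N s.

Definition inQSymm (x : QS) : Prop := forall s, s \in msupp x -> is_comp s.

Definition linext (K K' : choiceType) (h : K -> {malg int[K']})
  (x : {malg int[K]}) : {malg int[K']} :=
  \sum_(k <- msupp x) x@_k *: h k.

Fixpoint qsh (s : seq nat) : seq nat -> seq (seq nat) :=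
  match s with
  | [::] => fun t => [:: t]
  | a :: s' =>
      fix qsh_aux (t : seq nat) : seq (seq nat) :=
        match t with
        | [::] => [:: a :: s']
        | b :: t' =>
            map (cons a) (qsh s' t) ++ map (cons b) (qsh_aux t')
              ++ map (cons (a + b)%N) (qsh s' t')
        end
  end.

Definition qmul (x y : QS) : QS :=
  linext (fun s => linext (fun t => \sum_(u <- qsh s t) (<< u >> : QS)) y) x.

Definition qone : QS := << [::] >>.

Definition qexp (x : QS) (n : nat) : QS := iter n (qmul x) qone.

Definition qcomul (x : QS) : QS2 :=
  linext (fun s => \sum_(i < (size s).+1)
                     (<< (take i s, drop i s) >> : QS2)) x.

Definition qcounit (x : QS) : int := x@_[::].

Definition frob (n : nat) (x : QS) : QS :=
  linext (fun s => (<< map (muln n) s >> : QS)) x.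

Definition frob2 (n : nat) (z : QS2) : QS2 :=
  linext (fun st => (<< (map (muln n) st.1, map (muln n) st.2) >> : QS2)) z.

(* Symm inside QSymm: the Z-span of the monomial symmetric functions
   m_lambda = sum of [alpha] over all rearrangements alpha of lambda,
   i.e. the elements of QSymm whose coefficients are invariant under
   rearrangement of compositions. *)
Definition inSymm (x : QS) : Prop :=
  inQSymm x /\ forall s t : seq nat, perm_eq s t -> x@_s = x@_t.

(* power sum p_k = sum_i X_i^k = [k] *)
Definition psum (k : nat) : QS := << [:: k] >>.

(* Every identity about f_n is checked on the basis of compositions, where f_n
   multiplies all parts by n; it commutes with quasi-shuffles because
   multiplication by n is additive on parts.
   For the congruence, evaluate QSymm in F_p[X_1, ..., X_k] by sending [s] to
   the monomial quasisymmetric polynomial M_s(X_1, ..., X_k). This is a ring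
   morphism for the quasi-shuffle product, and it maps f_p [s] = [p s] to
   M_s^p because the Frobenius is additive in characteristic p; hence
   f_p x - x^p evaluates to 0. For k = size s, the coefficient of
   X_1^{s_1} ... X_k^{s_k} in the evaluation of y is the coefficient of [s] in
   y reduced mod p, so all coefficients of f_p x - x^p are divisible by p. *)

From HB Require Import structures.
From mathcomp Require Import all_boot all_order all_algebra.
From mathcomp Require Import finmap.
From mathcomp.multinomials Require Import monalg.
From mathcomp Require Import ring.
Import Order.TTheory GRing.Theory Num.Theory.
Local Open Scope ring_scope.
Set Implicit Arguments. Unset Strict Implicit.

Section MalgExtensionality.
Variables (K : choiceType) (V : zmodType).

Lemma monalgUz (k : K) (c : int) : << c *g k >> = << k >> *~ c.
Proof. by rewrite -[c in LHS]intz [LHS](raddfMz (mkmalgU k)). Qed.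

Lemma zmod_morphism_malg_eq (f g : {malg int[K]} -> V) :
  zmod_morphism f -> zmod_morphism g -> (forall k, f << k >> = g << k >>) -> f =1 g.
Proof.
move=> fB gB fg x.
pose F : {additive _ -> V} := HB.pack f (GRing.isZmodMorphism.Build _ _ f fB).
pose G : {additive _ -> V} := HB.pack g (GRing.isZmodMorphism.Build _ _ g gB).
rewrite -[f]/(F : _ -> _) -[g]/(G : _ -> _) (monalgE x) !raddf_sum.
by apply: eq_bigr => k _; rewrite monalgUz !raddfMz /= fg.
Qed.

End MalgExtensionality.

Lemma zmod_morphism_malg_eq2 (K K' : choiceType) (V : zmodType)
    (f g : {malg int[K]} -> {malg int[K']} -> V) :
  (forall y, zmod_morphism (f^~ y)) -> (forall x, zmod_morphism (f x)) ->
  (forall y, zmod_morphism (g^~ y)) -> (forall x, zmod_morphism (g x)) ->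
  (forall k k', f << k >> << k' >> = g << k >> << k' >>) -> forall x y, f x y = g x y.
Proof.
move=> fBl fBr gBl gBr fg x y.
apply: (zmod_morphism_malg_eq (fBl y) (gBl y)) => k.
exact: (zmod_morphism_malg_eq (fBr _) (gBr _) (fg k)).
Qed.

Section LinearExtension.
Variables (K K' : choiceType) (h : K -> {malg int[K']}).

Lemma linextEw x (B : {fset K}) : (msupp x `<=` B)%fset ->
  linext h x = \sum_(k <- B) x@_k *: h k.
Proof.
move=> sxB; apply: big_fset_incl => // k _ kx.
by rewrite mcoeff_outdom // scale0r.
Qed.

Lemma linext_is_linear : linear (linext h).
Proof.
move=> a x y.
pose B := (msupp (a *: x + y) `|` (msupp x `|` msupp y))%fset.
rewrite (@linextEw (a *: x + y) B) ?fsubsetUl //.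
rewrite (@linextEw x B); last by rewrite /B fsubsetU // fsubsetUl orbT.
rewrite (@linextEw y B); last by rewrite /B fsubsetU // fsubsetUr orbT.
rewrite scaler_sumr -big_split /=; apply: eq_bigr => k _.
by rewrite mcoeffD mcoeffZ scalerDl scalerA.
Qed.

HB.instance Definition _ :=
  GRing.isLinear.Build int {malg int[K]} {malg int[K']} *:%R (linext h)
    linext_is_linear.

Lemma linextU k : linext h << k >> = h k.
Proof. by rewrite /linext msuppU oner_eq0 big_seq_fset1 mcoeffUU scale1r. Qed.

Lemma mcoeff_linext x s :
  (linext h x)@_s = \sum_(k <- msupp x) x@_k * (h k)@_s.
Proof. by rewrite /linext raddf_sum; apply: eq_bigr => k _; exact: mcoeffZ. Qed.

Lemma eq_linext (h' : K -> {malg int[K']}) : h =1 h' -> linext h =1 linext h'.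
Proof. by move=> hh' x; apply: eq_bigr => k _; rewrite hh'. Qed.

Lemma linext_funB (h' : K -> {malg int[K']}) x :
  linext (fun k => h k - h' k) x = linext h x - linext h' x.
Proof. by rewrite /linext -sumrB; apply: eq_bigr => k _; rewrite scalerBr. Qed.

End LinearExtension.

HB.instance Definition _ n :=
  GRing.Linear.copy (frob n) (linext (fun s => << map (muln n) s >>)).
HB.instance Definition _ n :=
  GRing.Linear.copy (frob2 n)
    (linext (fun st => << (map (muln n) st.1, map (muln n) st.2) >>)).
HB.instance Definition _ :=
  GRing.Linear.copy qcomul
    (linext (fun s => \sum_(i < (size s).+1) << (take i s, drop i s) >>)).

Lemma qsh_nil_r s : qsh s [::] = [:: s].
Proof. by case: s. Qed.

Lemma qsh_cons a s b t : qsh (a :: s) (b :: t) =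
  map (cons a) (qsh s (b :: t)) ++ map (cons b) (qsh (a :: s) t)
  ++ map (cons (a + b)%N) (qsh s t).
Proof. by []. Qed.

Lemma qsh_map (f : nat -> nat) : {morph f : a b / (a + b)%N} ->
  forall s t, map (map f) (qsh s t) = qsh (map f s) (map f t).
Proof.
move=> fD; have map_cons a L :
    map (map f) (map (cons a) L) = map (cons (f a)) (map (map f) L).
  by rewrite -!map_comp.
elim=> [|a s IHs] t //; elim: t => [|b t IHt]; first by rewrite !qsh_nil_r.
rewrite [map f (a :: s)]/= [map f (b :: t)]/= !qsh_cons !map_cat !map_cons.
by rewrite IHs IHt IHs fD.
Qed.

Lemma qsh_comp s t : is_comp s -> is_comp t -> all is_comp (qsh s t).
Proof.
have all_cons c L : (0 < c)%N -> all is_comp L -> all is_comp (map (cons c) L).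
  move=> c_gt0 /allP LP; apply/allP => _ /mapP[u /LP uL ->].
  by rewrite /is_comp /= c_gt0.
elim: s t => [|a s IHs] t; first by rewrite /= andbT.
elim: t => [|b t IHt]; first by rewrite qsh_nil_r /= andbT.
move=> /[dup] cas /andP[a_gt0 cs] /[dup] cbt /andP[b_gt0 ct].
by rewrite qsh_cons !all_cat !all_cons ?IHs ?IHt ?addn_gt0 ?a_gt0.
Qed.

Lemma qmulUU s t : qmul << s >> << t >> = \sum_(u <- qsh s t) << u >>.
Proof. by rewrite /qmul !linextU. Qed.

Lemma qmulBl x x' y : qmul (x - x') y = qmul x y - qmul x' y.
Proof. exact: raddfB. Qed.

Lemma qmulBr x y y' : qmul x (y - y') = qmul x y - qmul x y'.
Proof. by rewrite /qmul -linext_funB; apply: eq_linext => s; rewrite raddfB. Qed.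

Lemma inQSymmP x : inQSymm x <-> forall s, ~~ is_comp s -> x@_s = 0.
Proof.
split=> [xQ s|xQ s]; first by apply: contraNeq => /[!mcoeff_neq0] /xQ ->.
by rewrite -mcoeff_neq0; apply: contraNT => /xQ ->.
Qed.

Lemma inQSymm0 : inQSymm 0.
Proof. by apply/inQSymmP => s _; rewrite mcoeff0. Qed.

Lemma inQSymmD x y : inQSymm x -> inQSymm y -> inQSymm (x + y).
Proof.
move=> /inQSymmP xQ /inQSymmP yQ; apply/inQSymmP => s sN.
by rewrite mcoeffD xQ ?yQ ?addr0.
Qed.

Lemma inQSymmB x y : inQSymm x -> inQSymm y -> inQSymm (x - y).
Proof.
move=> /inQSymmP xQ /inQSymmP yQ; apply/inQSymmP => s sN.
by rewrite mcoeffB xQ ?yQ ?subr0.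
Qed.

Lemma inQSymm_sum I (r : seq I) (P : pred I) (F : I -> QS) :
  (forall i, P i -> inQSymm (F i)) -> inQSymm (\sum_(i <- r | P i) F i).
Proof. by move=> FQ; apply: big_ind => //; [exact: inQSymm0 | exact: inQSymmD]. Qed.

Lemma inQSymmU s : is_comp s -> inQSymm << s >>.
Proof.
by move=> cs; apply/inQSymmP => t; rewrite mcoeffU; case: eqP => // <-; rewrite cs.
Qed.

Lemma inQSymm_linext (h : seq nat -> QS) x :
  (forall s, is_comp s -> inQSymm (h s)) -> inQSymm x -> inQSymm (linext h x).
Proof.
move=> hQ xQ; apply/inQSymmP => s sN; rewrite mcoeff_linext big_seq big1 // => t.
by move=> /xQ /hQ /inQSymmP ->; rewrite ?mulr0.
Qed.

Lemma inQSymm_qmul x y : inQSymm x -> inQSymm y -> inQSymm (qmul x y).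
Proof.
move=> xQ yQ; apply: inQSymm_linext xQ => s cs; apply: inQSymm_linext yQ => t ct.
by rewrite big_seq; apply: inQSymm_sum => u /(allP (qsh_comp cs ct)) /inQSymmU.
Qed.

Lemma inQSymm_qexp x n : inQSymm x -> inQSymm (qexp x n).
Proof.
by move=> xQ; elim: n => [|n IHn]; [exact: inQSymmU | exact: inQSymm_qmul].
Qed.

Lemma is_comp_map_muln n s : (0 < n)%N -> is_comp s -> is_comp (map (muln n) s).
Proof.
move=> n_gt0 /allP cs; rewrite /is_comp all_map; apply/allP => a /cs /= a_gt0.
by rewrite muln_gt0 n_gt0.
Qed.

Lemma inQSymm_frob n x : (0 < n)%N -> inQSymm x -> inQSymm (frob n x).
Proof.
by move=> n_gt0; apply: inQSymm_linext => s cs; apply/inQSymmU/is_comp_map_muln.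
Qed.

Section Frobenius.
Variable n : nat.

Lemma frobU s : frob n << s >> = << map (muln n) s >>.
Proof. exact: linextU. Qed.

Lemma frob2U st :
  frob2 n << st >> = << (map (muln n) st.1, map (muln n) st.2) >>.
Proof. exact: linextU. Qed.

Lemma frob_qone : frob n qone = qone.
Proof. exact: frobU. Qed.

Lemma frob_qmul x y : frob n (qmul x y) = qmul (frob n x) (frob n y).
Proof.
move: x y; apply: zmod_morphism_malg_eq2 => [y x x'|x y y'|y x x'|x y y'|s t] /=.
- by rewrite qmulBl raddfB.
- by rewrite qmulBr raddfB.
- by rewrite raddfB qmulBl.
- by rewrite raddfB qmulBr.
rewrite !frobU !qmulUU raddf_sum -qsh_map => [|a b]; last exact: mulnDr.
by rewrite big_map; apply: eq_bigr => u _; exact: frobU.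
Qed.

Lemma frob_qcomul x : qcomul (frob n x) = frob2 n (qcomul x).
Proof.
move: x; apply: zmod_morphism_malg_eq => [x y|x y|s] /=; rewrite ?raddfB //.
rewrite frobU /qcomul !linextU raddf_sum size_map; apply: eq_bigr => i _.
by rewrite [RHS]frob2U /= map_take map_drop.
Qed.

Hypothesis n_gt0 : (0 < n)%N.

Lemma mcoeff_frob_map x s : (frob n x)@_(map (muln n) s) = x@_s.
Proof.
have muln_inj : injective (muln n).
  by move=> a b /eqP; rewrite eqn_mul2l eqn0Ngt n_gt0 => /eqP.
move: x; apply: zmod_morphism_malg_eq => [x y|x y|t] /=; rewrite ?raddfB //.
by rewrite frobU !mcoeffU (inj_eq (inj_map muln_inj)).
Qed.

Lemma mcoeff_frob x s : (frob n x)@_s =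
  if all (dvdn n) s then x@_(map (divn^~ n) s) else 0.
Proof.
case: ifP => [ns | /negbT nNs].
  rewrite -[s in LHS](_ : map (muln n) (map (divn^~ n) s) = s) ?mcoeff_frob_map //.
  by rewrite -map_comp map_id_in // => a /(allP ns) /= na; rewrite mulnC divnK.
rewrite mcoeff_linext big1 // => t _.
rewrite mcoeffU; case: eqP => [ts|_]; last exact: mulr0.
by case/negP: nNs; rewrite -ts all_map; apply/allP => a _ /=; rewrite dvdn_mulr.
Qed.

Lemma qcounit_frob x : qcounit (frob n x) = qcounit x.
Proof. exact: (mcoeff_frob_map x [::]). Qed.

Lemma inSymm_frob x : inSymm x -> inSymm (frob n x).
Proof.
move=> [xQ xS]; split=> [|s t st]; first exact: inQSymm_frob.
rewrite !mcoeff_frob (perm_all _ st); case: ifP => // _.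
by apply: xS; apply: perm_map.
Qed.

End Frobenius.

Lemma frob1 : frob 1 =1 id.
Proof.
apply: zmod_morphism_malg_eq => [x y|//|s]; first by rewrite raddfB.
by rewrite frobU (eq_map mul1n) map_id.
Qed.

Lemma frobM n m x : frob n (frob m x) = frob (n * m) x.
Proof.
move: x; apply: zmod_morphism_malg_eq => [x y|x y|s] /=; rewrite ?raddfB //.
by rewrite !frobU -map_comp; congr << _ >>; apply: eq_map => a /=; rewrite mulnA.
Qed.

Section QSymEvaluation.
Variable p : nat.

(* polyFp k = F_p[X_1, ..., X_k], as iterated univariate polynomials with X_1
   outermost; qsymM k s = M_s(X_1, ..., X_k), split on whether X_1 occurs. *)
Fixpoint polyFp (k : nat) : comNzRingType :=
  match k with
  | 0 => GRing.ComNzRing.clone 'F_p _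
  | k.+1 => GRing.ComNzRing.clone {poly polyFp k} _
  end.

Fixpoint qsymM (k : nat) (s : seq nat) : polyFp k :=
  match k return polyFp k with
  | 0 => (s == [::])%:R
  | k.+1 => ((qsymM k s)%:P
             + (if s is a :: s' then (qsymM k s')%:P * 'X^a else 0) : {poly polyFp k})
  end.

Lemma qsymM_nil k : qsymM k [::] = 1.
Proof. by elim: k => //= k ->; rewrite addr0. Qed.

Lemma qsymM_cons k a s :
  qsymM k.+1 (a :: s) = (qsymM k (a :: s))%:P + (qsymM k s)%:P * 'X^a.
Proof. by []. Qed.

Lemma sum_qsymM_map_cons k c (L : seq (seq nat)) :
  \sum_(u <- map (cons c) L) qsymM k.+1 u =
  (\sum_(u <- L) qsymM k (c :: u))%:P + (\sum_(u <- L) qsymM k u)%:P * 'X^c.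
Proof. by rewrite big_map big_split /= !rmorph_sum mulr_suml. Qed.

Lemma qsymM_qsh k s t : qsymM k s * qsymM k t = \sum_(u <- qsh s t) qsymM k u.
Proof.
elim: k s t => [|k IHk] [|a s] [|b t];
  rewrite ?qsymM_nil ?mul1r ?mulr1 ?qsh_nil_r ?big_seq1 ?qsymM_nil //.
  by rewrite qsh_cons !big_cat !big_map !big1 //= mul0r !addr0.
have E := IHk (a :: s) (b :: t); rewrite qsh_cons !big_cat !big_map in E.
rewrite qsh_cons !big_cat !sum_qsymM_map_cons -!IHk !qsymM_cons /=.
(* The three quasi-shuffle branches give the X^a, X^b and X^(a+b) terms. *)
move: E; set S1 := \sum_(u <- _) _; set S2 := \sum_(u <- _) _; set S3 := \sum_(u <- _) _.
move=> /= E.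
have -> : S1 = qsymM k (a :: s) * qsymM k (b :: t) - S2 - S3 by rewrite E; ring.
by rewrite !rmorphB !rmorphM exprD /=; ring.
Qed.

Definition qsym_eval k : QS -> polyFp k := mmap intr (qsymM k).

HB.instance Definition _ k :=
  GRing.Additive.copy (qsym_eval k) (mmap intr (qsymM k)).

Lemma qsym_evalU k s : qsym_eval k << s >> = qsymM k s.
Proof. by rewrite /qsym_eval mmapU /= mulr1z mul1r. Qed.

Lemma qsym_eval_qmul k x y :
  qsym_eval k (qmul x y) = qsym_eval k x * qsym_eval k y.
Proof.
move: x y; apply: zmod_morphism_malg_eq2 => [y x x'|x y y'|y x x'|x y y'|s t] /=.
- by rewrite qmulBl raddfB.
- by rewrite qmulBr raddfB.
- by rewrite raddfB mulrBl.
- by rewrite raddfB mulrBr.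
rewrite qmulUU raddf_sum !qsym_evalU qsymM_qsh.
by apply: eq_bigr => u _; exact: qsym_evalU.
Qed.

Lemma qsym_eval_qexp k x m : qsym_eval k (qexp x m) = qsym_eval k x ^+ m.
Proof.
elim: m => [|m IHm]; first by rewrite qsym_evalU qsymM_nil.
by rewrite /qexp iterS -/(qexp x m) qsym_eval_qmul IHm exprS.
Qed.

(* The coefficient of X_1^(s_1) ... X_k^(s_k); missing parts count as 0. *)
Fixpoint coef_word (k : nat) : seq nat -> polyFp k -> 'F_p :=
  match k return seq nat -> polyFp k -> 'F_p with
  | 0 => fun _ f => f
  | k.+1 => fun s (f : {poly polyFp k}) => coef_word (behead s) f`_(head 0%N s)
  end.

Lemma coef_word_is_zmod_morphism k s : zmod_morphism (@coef_word k s).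
Proof. by elim: k s => [|k IHk] s f g //=; rewrite coefB IHk. Qed.

HB.instance Definition _ k s :=
  GRing.isZmodMorphism.Build _ _ (@coef_word k s) (@coef_word_is_zmod_morphism k s).

(* With a zero part, X^0 would also pick up the terms avoiding that variable. *)
Lemma coef_word_qsymM s u : is_comp s ->
  coef_word s (qsymM (size s) u) = (u == s)%:R.
Proof.
elim: s u => [|a s IHs] [|b u] //= /andP[a_gt0 cs].
  by rewrite qsymM_nil addr0 coefC gtn_eqF // raddf0.
rewrite coefD coefC gtn_eqF // add0r coefMXn coefC eqseq_cons.
case: (ltngtP a b) => [ab|ba|<-]; last by rewrite subnn eqxx IHs.
  by rewrite raddf0.
by rewrite subn_eq0 leqNgt ba raddf0.
Qed.

Lemma coef_word_qsym_eval s x : is_comp s ->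
  coef_word s (qsym_eval (size s) x) = (x@_s)%:~R.
Proof.
move=> cs; move: x; apply: zmod_morphism_malg_eq => [x y|x y|u] /=.
- by rewrite !raddfB.
- by rewrite mcoeffB rmorphB.
by rewrite qsym_evalU coef_word_qsymM // mcoeffU; case: eqP.
Qed.

Hypothesis p_pr : prime p.

Lemma polyFp_pchar k : p \in [pchar (polyFp k)].
Proof.
by elim: k => [|k IHk]; [exact: pchar_Fp | rewrite /= (pchar_poly (polyFp k))].
Qed.

Lemma qsymM_frob k s : qsymM k (map (muln p) s) = qsymM k s ^+ p.
Proof.
elim: k s => [|k IHk] [|a s].
- by rewrite /= expr1n.
- by rewrite /= expr0n eqn0Ngt prime_gt0.
- by rewrite [map _ _]/= !qsymM_nil expr1n.
rewrite [map _ _]/= !qsymM_cons -map_cons !IHk !rmorphXn /= mulnC exprM.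
by rewrite -!(pFrobenius_autE (polyFp_pchar k.+1)) rmorphD rmorphM.
Qed.

Lemma qsym_eval_frob k x : qsym_eval k (frob p x) = qsym_eval k x ^+ p.
Proof.
have pFk := polyFp_pchar k.
move: x; apply: zmod_morphism_malg_eq => [x y|x y|s] /=; rewrite ?raddfB //.
  by rewrite -!(pFrobenius_autE pFk) rmorphB.
by rewrite frobU !qsym_evalU qsymM_frob.
Qed.

Lemma dvdz_mcoeff_frob_sub_qexp x s : inQSymm x ->
  (p%:Z %| (frob p x - qexp x p)@_s)%Z.
Proof.
set y := _ - _ => xQ.
have /inQSymmP yQ : inQSymm y.
  apply: inQSymmB; last exact: inQSymm_qexp.
  exact: inQSymm_frob (prime_gt0 p_pr) xQ.
have [cs|/yQ ->] := boolP (is_comp s); last exact: dvdz0.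
rewrite (dvdz_pcharf (pchar_Fp p_pr)) -coef_word_qsym_eval //.
by rewrite raddfB /= qsym_eval_frob qsym_eval_qexp subrr raddf0.
Qed.

End QSymEvaluation.

Theorem mainTheorem6 :
  (forall n : nat, (0 < n)%N ->
     (forall x, inQSymm x -> inQSymm (frob n x))
     /\ (forall (a : int) (x y : QS),
           frob n (a *: x + y) = a *: frob n x + frob n y)
     /\ frob n qone = qone
     /\ (forall x y, inQSymm x -> inQSymm y ->
           frob n (qmul x y) = qmul (frob n x) (frob n y))
     /\ (forall x, inQSymm x -> qcomul (frob n x) = frob2 n (qcomul x))
     /\ (forall x, inQSymm x -> qcounit (frob n x) = qcounit x))
  /\ (forall x, inQSymm x -> frob 1 x = x)
  /\ (forall (n m : nat) x, (0 < n)%N -> (0 < m)%N -> inQSymm x ->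
        frob n (frob m x) = frob (n * m) x)
  /\ (forall n : nat, (0 < n)%N ->
        (forall x, inSymm x -> inSymm (frob n x))
        /\ (forall k : nat, (0 < k)%N -> frob n (psum k) = psum (n * k)))
  /\ (forall (p : nat) (x : QS), prime p -> inQSymm x ->
        forall s : seq nat, ((p%:Z) %| (frob p x - qexp x p)@_s)%Z).
Proof.
split.
  move=> n n_gt0; split; first by move=> x; exact: inQSymm_frob.
  split; first exact: linearP.
  split; first exact: frob_qone.
  split; first by move=> x y _ _; exact: frob_qmul.
  by split=> x _; [exact: frob_qcomul | exact: qcounit_frob].
split; first by move=> x _; exact: frob1.
split; first by move=> n m x _ _ _; exact: frobM.
split; first by move=> n n_gt0; split=> [x|k _]; [exact: inSymm_frob | exact: frobU].
by move=> p x p_pr xQ s; exact: dvdz_mcoeff_frob_sub_qexp.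
Qed.
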